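(* The sequential specification $\mathsf{Queue}$, defined by the ordered rules $R_0, R_{Enq}, R_{EnqDeq}, R_{DeqEmpty}$, is step-by-step linearizable. That is, for every differentiated history $h$ and every data value $x$: (1) if $h \sqsubseteq u$ for some $u\in M_x(R_0)$, and $h\setminus x\sqsubseteq [\![R_0]\!]$, then $h\sqsubseteq [\![R_0]\!]$; (2) if $h \sqsubseteq u$ for some $u \in M_x(R_{Enq})$, and $h\setminus x \sqsubseteq [\![R_0,R_{Enq}]\!]$, then $h \sqsubseteq [\![R_0,R_{Enq}]\!]$; (3) if $h \sqsubseteq u$ for some $u \in M_x(R_{EnqDeq})$, and $h\setminus x \sqsubseteq [\![R_0,R_{Enq},R_{EnqDeq}]\!]$, then $h \sqsubseteq [\![R_0,R_{Enq},R_{EnqDeq}]\!]$; (4) if $h \sqsubseteq u$ for some $u \in M_x(R_{DeqEmpty})$, and $h\setminus x \sqsubseteq \mathsf{Queue}$, then $h \sqsubseteq \mathsf{Queue}$.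
   Context: Data values are natural numbers. An operation (resp. method event) is a pair of a method name in $\{Enq, Deq, DeqEmpty\}$ and a data value; write e.g. $Enq(x)$. For $DeqEmpty$ the data value is a ghost identifier. A history $h$ is a finite set of operations together with a strict partial order $<_{hb}$ (happens-before) which is an interval order (if $o_1<_{hb}o_2$ and $o_3<_{hb}o_4$ then $o_1<_{hb}o_4$ or $o_3<_{hb}o_2$). A sequential execution is a finite sequence of method events. A history (or sequential execution) is differentiated if each data value is carried by at most one $Enq$ or $DeqEmpty$ operation, and the value of a $DeqEmpty$ operation is carried by no other operation. $h\sqsubseteq u$ ($h$ is linearizable w.r.t. $u$) means there is a bijection between the operations of $h$ and the positions of $u$ preserving method and data value such that whenever $o_1<_{hb}o_2$, the image of $o_1$ precedes the image of $o_2$ in $u$; for a set $S$ of sequential executions, $h\sqsubseteq S$ means $h\sqsubseteq u$ for some $u\in S$. $h\setminus x$ is the history obtained by removing all operations with data value $x$ (with induced order). An $Enq(d)$ event in a sequence $u$ is unmatched if $u$ contains no $Deq(d)$; $\mathrm{matched}(u)$ means $u$ has no unmatched $Enq$; $\mathrm{only}(u,Enq)$ means all events of $u$ are $Enq$ events. The rules: $R_0$: $\epsilon\in\mathsf{Queue}$. $R_{Enq}$: $u\in\mathsf{Queue}\wedge \mathrm{only}(u,Enq)\Rightarrow Enq(x)\cdot u\in\mathsf{Queue}$. $R_{EnqDeq}$: $u\cdot v\in\mathsf{Queue}\wedge\mathrm{only}(u,Enq)\Rightarrow Enq(x)\cdot u\cdot Deq(x)\cdot v\in\mathsf{Queue}$.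 $R_{DeqEmpty}$: $u\cdot v\in\mathsf{Queue}\wedge \mathrm{matched}(u)\Rightarrow u\cdot DeqEmpty(x)\cdot v\in\mathsf{Queue}$ (in each rule, $x$ does not occur in $u,v$). For a list of rules $R_1,\dots,R_k$, $[\![R_1,\dots,R_k]\!]$ is the smallest set of sequential executions closed under these rules; $\mathsf{Queue}=[\![R_0,R_{Enq},R_{EnqDeq},R_{DeqEmpty}]\!]$. The matching sets with witness $x$ (no recursive membership condition): $M_x(R_0)=\{\epsilon\}$; $M_x(R_{Enq})$ = sequences $Enq(x)\cdot u$ with $\mathrm{only}(u,Enq)$; $M_x(R_{EnqDeq})$ = sequences $Enq(x)\cdot u\cdot Deq(x)\cdot v$ with $\mathrm{only}(u,Enq)$; $M_x(R_{DeqEmpty})$ = sequences $u\cdot DeqEmpty(x)\cdot v$ with $\mathrm{matched}(u)$; in all cases $x$ does not occur in $u$ or $v$. *)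

From HB Require Import structures.
From mathcomp Require Import all_boot.

Set Implicit Arguments.
Unset Strict Implicit.
Unset Printing Implicit Defensive.

Inductive meth := Enq | Deq | DeqEmpty.

Lemma meth_eq_dec : comparable meth.
Proof. by move=> a b; rewrite /decidable; decide equality. Defined.

HB.instance Definition _ := comparableMixin meth_eq_dec.

Definition op := (meth * nat)%type.
Definition mk (m : meth) (d : nat) : op := (m, d).

Definition sexec := seq op.

(* Histories: a finite set of operations (a duplicate-free list) together
   with a happens-before relation. *)
Record history := History { ops : seq op; hb : op -> op -> Prop }.

(* Well-formedness: hb is a strict partial order on the operations of h
   which is an interval order. *)
Definition is_history (h : history) : Prop :=
  [/\ uniq (ops h),
      (forall a b, hb h a b -> a \in ops h /\ b \in ops h),
      (forall a, ~ hb h a a),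
      (forall a b c, hb h a b -> hb h b c -> hb h a c)
    & (forall o1 o2 o3 o4, hb h o1 o2 -> hb h o3 o4 -> hb h o1 o4 \/ hb h o3 o2)].

Definition is_EnqOrDeqEmpty (o : op) : bool := (o.1 == Enq) || (o.1 == DeqEmpty).

Definition differentiated (h : history) : Prop :=
  (forall x : nat, count (fun o => is_EnqOrDeqEmpty o && (o.2 == x)) (ops h) <= 1) /\
  (forall o, o \in ops h -> o.1 = DeqEmpty ->
     forall o', o' \in ops h -> o'.2 = o.2 -> o' = o).

(* h ⊑ u : a bijection between the operations of h and the positions of u,
   preserving method and data value, and respecting happens-before. *)
Definition lin (h : history) (u : sexec) : Prop :=
  exists f : op -> nat,
    [/\ (forall o, o \in ops h -> f o < size u /\ nth (mk Enq 0) u (f o) = o),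
        {in ops h &, injective f},
        (forall i, i < size u -> exists2 o, o \in ops h & f o = i)
      & (forall a b, hb h a b -> f a < f b)].

Definition lin_set (h : history) (S : sexec -> Prop) : Prop :=
  exists2 u, S u & lin h u.

Definition hist_remove (h : history) (x : nat) : history :=
  History [seq o <- ops h | o.2 != x]
          (fun a b => hb h a b /\ a.2 <> x /\ b.2 <> x).

Definition occurs (x : nat) (u : sexec) : bool := has (fun o => o.2 == x) u.
Definition only_enq (u : sexec) : bool := all (fun o => o.1 == Enq) u.
Definition matched (u : sexec) : Prop :=
  forall d, mk Enq d \in u -> mk Deq d \in u.

(* [[R_0, ...]] : the smallest set of sequential executions closed under
   R_0 and the enabled rules among R_Enq, R_EnqDeq, R_DeqEmpty (in that order). *)
Inductive gen (rEnq rEnqDeq rDeqEmpty : bool) : sexec -> Prop :=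
| gen_R0 : gen rEnq rEnqDeq rDeqEmpty [::]
| gen_REnq : forall x u, rEnq -> gen rEnq rEnqDeq rDeqEmpty u -> only_enq u ->
    ~~ occurs x u -> gen rEnq rEnqDeq rDeqEmpty (mk Enq x :: u)
| gen_REnqDeq : forall x u v, rEnqDeq -> gen rEnq rEnqDeq rDeqEmpty (u ++ v) ->
    only_enq u -> ~~ occurs x u -> ~~ occurs x v ->
    gen rEnq rEnqDeq rDeqEmpty (mk Enq x :: u ++ mk Deq x :: v)
| gen_RDeqEmpty : forall x u v, rDeqEmpty -> gen rEnq rEnqDeq rDeqEmpty (u ++ v) ->
    matched u -> ~~ occurs x u -> ~~ occurs x v ->
    gen rEnq rEnqDeq rDeqEmpty (u ++ mk DeqEmpty x :: v).

Definition L_R0 := gen false false false.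
Definition L_R0_Enq := gen true false false.
Definition L_R0_Enq_EnqDeq := gen true true false.
Definition Queue := gen true true true.

(* Matching sets M_x(R) (no recursive membership condition). *)
Definition M_R0 (x : nat) (w : sexec) : Prop := w = [::].
Definition M_REnq (x : nat) (w : sexec) : Prop :=
  exists u, [/\ w = mk Enq x :: u, only_enq u & ~~ occurs x u].
Definition M_REnqDeq (x : nat) (w : sexec) : Prop :=
  exists u v, [/\ w = mk Enq x :: u ++ mk Deq x :: v, only_enq u,
                  ~~ occurs x u & ~~ occurs x v].
Definition M_RDeqEmpty (x : nat) (w : sexec) : Prop :=
  exists u v, [/\ w = u ++ mk DeqEmpty x :: v, matched u,
                  ~~ occurs x u & ~~ occurs x v].

(* The language
   [[R0, REnq, ...]] consists of the duplicate-free sequences that never reuse the value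
   of a DeqEmpty, dequeue a value only after enqueuing it, dequeue in FIFO order, perform
   DeqEmpty only after every earlier enqueue has been dequeued, and contain Deq or DeqEmpty
   events only if the matching rule is enabled: a sequence with these properties is peeled,
   by induction on its length, by the rule producing some DeqEmpty or its first Enq.
   Likewise h ⊑ u says that u lists the operations of h once each, extending happens-before.
   Cases (1) and (2) are then immediate. For (3) and (4), a linearization w' of h \ x is
   split stably in two, and the events of value x are inserted around the cut:
   - for R_EnqDeq, Enq(x) comes first and Deq(x) follows the enqueues of w' that lie no
     later than some hb-predecessor of Deq(x);
   - for R_DeqEmpty, DeqEmpty(x) follows the operations whose value is in the least set of
     values containing those of the hb-predecessors of DeqEmpty(x) and closed under
     hb-predecessors.  Since hb is an interval order and h ⊑ u0·DeqEmpty(x)·v0 with u0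
     matched, every such value is completed within u0; hence the first part is matched and
     contains no hb-successor of DeqEmpty(x).
   A stable split keeps the order inside each part, which is what preserves the queue
   properties. *)

From mathcomp Require Import all_boot boolp.

Set Implicit Arguments.
Unset Strict Implicit.
Unset Printing Implicit Defensive.

Section Before.
Variable T : eqType.
Implicit Types (s u v : seq T) (a b c : T).

Definition before s a b : bool := [&& a \in s, b \in s & index a s < index b s].

Lemma before_mem s a b : before s a b -> (a \in s) && (b \in s).
Proof. by case/and3P=> -> ->. Qed.

Lemma before_irr s a : before s a a = false.
Proof. by rewrite /before ltnn !andbF. Qed.

Lemma before_asym s a b : before s a b -> before s b a = false.
Proof.
by case/and3P=> _ _ ab; apply/negP=> /and3P[_ _ /(ltn_trans ab)]; rewrite ltnn.
Qed.

Lemma before_total s a b : a \in s -> b \in s -> a != b -> before s a b || before s b a.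
Proof.
move=> aS bS; apply: contraNT; rewrite /before aS bS /= negb_or -!leqNgt => ba.
apply/eqP; rewrite -(nth_index a aS) -(nth_index a bS); congr nth.
by apply/eqP; rewrite eqn_leq andbC.
Qed.

Lemma before_cons c s a b : uniq (c :: s) ->
  before (c :: s) a b = (a == c) && (b \in s) || before s a b.
Proof.
case/andP=> cs _; rewrite /before !in_cons /=.
have [->|ac] := eqVneq a c; have [->|bc] := eqVneq b c;
  rewrite ?eqxx ?(negbTE cs) ?(eq_sym c) ?(negbTE ac) ?(negbTE bc) //= ltnS.
Qed.

Lemma before_cat s1 s2 a b : uniq (s1 ++ s2) ->
  before (s1 ++ s2) a b =
  [|| before s1 a b, (a \in s1) && (b \in s2) | before s2 a b].
Proof.
elim: s1 => [|c s1 IH] U; first by rewrite /before andbF.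
have Uc : uniq (c :: s1) by move: U; rewrite cat_uniq => /and3P[].
rewrite cat_cons before_cons // IH; last by case/andP: U.
rewrite before_cons // mem_cat in_cons.
by case: (a == c); case: (b \in s1); case: (b \in s2); case: (a \in s1); case: before.
Qed.

Lemma before_prefix s1 s2 a b : uniq (s1 ++ s2) ->
  before (s1 ++ s2) a b -> b \in s1 -> a \in s1.
Proof.
move=> U; rewrite before_cat // => /or3P[/before_mem/andP[]|/andP[]|/before_mem/andP[_ b2] b1] //.
by move: U; rewrite cat_uniq => /and3P[_ /hasPn/(_ b b2)]; rewrite b1.
Qed.

Lemma before_filter (p : pred T) s a b : uniq s ->
  before (filter p s) a b = [&& before s a b, p a & p b].
Proof.
elim: s => [|c s IH] U; first by rewrite /before.
have [cs Us] := andP U.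
rewrite before_cons //= [RHS]andb_orl; case pc: (p c); last first.
  by rewrite IH //; have [->|] := eqVneq a c; rewrite ?pc ?andbF.
have Uf : uniq (c :: filter p s) by rewrite /= mem_filter (negPf cs) andbF filter_uniq.
rewrite before_cons // IH // mem_filter.
by have [->|] := eqVneq a c; rewrite ?pc //=; case: (p b); case: (b \in s).
Qed.

Let beforeNl s y b : y \notin s -> before s y b = false.
Proof. by move=> ys; apply/negbTE; apply: contra ys => /before_mem/andP[]. Qed.

Let beforeNr s a y : y \notin s -> before s a y = false.
Proof. by move=> ys; apply/negbTE; apply: contra ys => /before_mem/andP[]. Qed.

Section Insert.
Variables (u v : seq T) (c : T).
Hypothesis U : uniq (u ++ c :: v).

Let cu : c \notin u.
Proof. by move: U; rewrite cat_uniq /= => /and3P[_ /norP[]]. Qed.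

Let Ucv : uniq (c :: v).
Proof. by move: U; rewrite cat_uniq => /and3P[]. Qed.

Let cv : c \notin v.
Proof. by case/andP: Ucv. Qed.

Lemma before_insert a b : a != c -> b != c ->
  before (u ++ c :: v) a b = before (u ++ v) a b.
Proof.
have -> : u ++ v = filter (predC1 c) (u ++ c :: v).
  rewrite filter_cat /= eqxx; congr (_ ++ _); apply/esym/all_filterP/allP => y;
    by apply: contraTneq => ->.
by move=> ac bc; rewrite before_filter //= ac bc !andbT.
Qed.

Lemma before_insert_l a : before (u ++ c :: v) a c = (a \in u).
Proof.
by rewrite before_cat // before_cons // !beforeNr // in_cons eqxx (negPf cv) andbT andbF !orbF.
Qed.

Lemma before_insert_r b : before (u ++ c :: v) c b = (b \in v).
Proof.
by rewrite before_cat // before_cons // !beforeNl // (negPf cu) eqxx !orbF.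
Qed.

End Insert.

Lemma mem_insert u c v a : (a \in u ++ c :: v) = (a == c) || (a \in u ++ v).
Proof. by rewrite !mem_cat in_cons orbCA. Qed.

Lemma uniq_insert u c v : uniq (u ++ c :: v) = (c \notin u ++ v) && uniq (u ++ v).
Proof. by rewrite -cat1s uniq_catCA. Qed.

Lemma before_cons_head c s b : uniq (c :: s) -> before (c :: s) c b = (b \in s).
Proof. by move=> U; rewrite (@before_insert_r [::] s c U). Qed.

Lemma before_cons_headN c s a : uniq (c :: s) -> before (c :: s) a c = false.
Proof. by move=> U; rewrite (@before_insert_l [::] s c U). Qed.

Lemma before_cons_neq c s a b : uniq (c :: s) -> a != c ->
  before (c :: s) a b = before s a b.
Proof. by move=> U ac; rewrite before_cons // (negbTE ac). Qed.

Lemma perm_filterC_cat (p : pred T) s : perm_eq (filter p s ++ filter (predC p) s) s.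
Proof. by apply/permPl; apply: perm_filterC. Qed.

Lemma before_part (p : pred T) s a b : uniq s -> a \in s -> b \in s ->
  before (filter p s ++ filter (predC p) s) a b =
  p a && ~~ p b || (p a == p b) && before s a b.
Proof.
move=> U aS bS; rewrite before_cat; last by rewrite (perm_uniq (perm_filterC_cat p s)).
rewrite !before_filter // !mem_filter /= aS bS.
by case: (p a); case: (p b); case: before.
Qed.

End Before.

Definition linearization (h : history) (u : sexec) : Prop :=
  [/\ uniq u, ops h =i u & forall a b, hb h a b -> before u a b].

Lemma linP h u : (forall a b, hb h a b -> a \in ops h /\ b \in ops h) ->
  lin h u <-> linearization h u.
Proof.
move=> hb_ops; split=> [[f [f_nth f_inj f_onto f_hb]]|[Uu hu u_hb]].
- have Uu : uniq u.
    apply/(uniqP (mk Enq 0)) => i j; rewrite !inE => /f_onto[o oh <-] /f_onto[o' o'h <-].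
    by have [_ ->] := f_nth o oh; have [_ ->] := f_nth o' o'h => ->.
  have hu : ops h =i u.
    move=> o; apply/idP/idP => [/f_nth[lt <-]|ou]; first exact: mem_nth.
    have [o' o'h fo'] := f_onto (index o u) (etrans (index_mem o u) ou).
    by have [_] := f_nth o' o'h; rewrite fo' nth_index // => ->.
  have f_index o : o \in ops h -> index o u = f o.
    by case/f_nth=> lt E; rewrite -{1}E index_uniq.
  split=> // a b /[dup] /hb_ops[ah bh] /f_hb.
  by rewrite /before -!hu ah bh !f_index.
- exists (index^~ u); split.
  + by move=> o; rewrite hu => ou; rewrite index_mem nth_index.
  + by move=> a b; rewrite !hu => au bu /(congr1 (nth (mk Enq 0) u)); rewrite !nth_index.
  + move=> i iu; exists (nth (mk Enq 0) u i); last by rewrite index_uniq.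
    by rewrite hu mem_nth.
  + by move=> a b /u_hb/and3P[].
Qed.

Definition has_meth (m : meth) (w : sexec) : bool := has (fun o => o.1 == m) w.

Definition queue_valid (w : sexec) : Prop :=
  [/\ uniq w,
      forall d o, mk DeqEmpty d \in w -> o \in w -> o.2 = d -> o = mk DeqEmpty d,
      forall d, mk Deq d \in w -> before w (mk Enq d) (mk Deq d),
      forall a b, before w (mk Enq a) (mk Enq b) -> mk Deq b \in w ->
        before w (mk Deq a) (mk Deq b)
    & forall a d, before w (mk Enq a) (mk DeqEmpty d) ->
        before w (mk Deq a) (mk DeqEmpty d)].

Lemma queue_valid_only_enq w : uniq w -> only_enq w -> queue_valid w.
Proof.
move=> Uw /allP enq; have nE m d : (m, d) \in w -> m = Enq by move/enq/eqP.
by split=> // [d o /nE|d /nE|a b _ /nE|a d /before_mem/andP[_ /nE]].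
Qed.

Lemma queue_valid_filter (q : pred nat) w :
  queue_valid w -> queue_valid (filter (fun o => q o.2) w).
Proof.
case=> Uw DE_w Deq_w fifo_w empty_w.
split=> [|d o|d|a b|a d]; rewrite ?mem_filter ?before_filter ?filter_uniq //=.
- by case/andP=> _ Dw /andP[_ ow]; apply: DE_w.
- by case/andP=> -> /Deq_w ->.
- by case/and3P=> /fifo_w Hab -> -> /andP[_ /Hab ->].
- by case/and3P=> /empty_w -> -> ->.
Qed.

Lemma queue_valid_part_value (q : pred nat) w :
  queue_valid w -> matched (filter (fun o => q o.2) w) ->
  queue_valid (filter (fun o => q o.2) w ++ filter (predC (fun o => q o.2)) w).
Proof.
set p := fun o : op => q o.2; set w2 := _ ++ _.
case=> Uw DE_w Deq_w fifo_w empty_w m_p; have Pw := perm_filterC_cat p w.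
have Dw a : mk Enq a \in w -> q a -> mk Deq a \in w.
  by move=> Ea qa; have:= m_p a; rewrite !mem_filter /p /= qa Ea => /(_ isT).
have Bw o o' : o \in w -> o' \in w ->
    before w2 o o' = q o.2 && ~~ q o'.2 || (q o.2 == q o'.2) && before w o o'.
  exact: before_part.
split=> [|d o|d|a b|a d]; rewrite ?(perm_uniq Pw) ?(perm_mem Pw) //.
- exact: DE_w.
- move=> Db; have B := Deq_w d Db; have /andP[Ed _] := before_mem B.
  by rewrite Bw // B eqxx orbT.
- move=> Bab Db; have /andP[Ea Eb] := before_mem Bab.
  rewrite !(perm_mem Pw) in Ea Eb; move: Bab; rewrite Bw //=.
  case/orP=> [/andP[qa nqb]|/andP[/eqP qab /fifo_w/(_ Db) B]].
    by rewrite Bw ?(Dw a) //= qa nqb.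
  by have /andP[Da _] := before_mem B; rewrite Bw //= qab eqxx B orbT.
- move=> Bad; have /andP[Ea Dd] := before_mem Bad.
  rewrite !(perm_mem Pw) in Ea Dd; move: Bad; rewrite Bw //=.
  case/orP=> [/andP[qa nqd]|/andP[/eqP qad /empty_w B]].
    by rewrite Bw ?(Dw a) //= qa nqd.
  by have /andP[Da _] := before_mem B; rewrite Bw //= qad eqxx B orbT.
Qed.

Lemma queue_valid_part_enq (p : pred op) w :
  queue_valid w -> ~~ has_meth DeqEmpty w ->
  (forall o, p o -> o.1 = Enq) ->
  (forall a b, a.1 = Enq -> before w a b -> p b -> p a) ->
  queue_valid (filter p w ++ filter (predC p) w).
Proof.
set w2 := _ ++ _; case=> Uw DE_w Deq_w fifo_w _ /hasPn noDE p_enq p_prefix.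
have Pw := perm_filterC_cat p w.
have Bw o o' : o \in w -> o' \in w ->
    before w2 o o' = p o && ~~ p o' || (p o == p o') && before w o o'.
  exact: before_part.
have nDeq d : p (mk Deq d) = false by apply/negbTE/negP => /p_enq.
split=> [|d o|d|a b|a d]; rewrite ?(perm_uniq Pw) ?(perm_mem Pw) //.
- exact: DE_w.
- move=> Db; have B := Deq_w d Db; have /andP[Ed _] := before_mem B.
  by rewrite Bw // nDeq B; case: (p _).
- move=> Bab Db; have /andP[Ea Eb] := before_mem Bab.
  rewrite !(perm_mem Pw) in Ea Eb.
  have B : before w (mk Enq a) (mk Enq b).
    move: Bab; rewrite Bw // => /orP[/andP[pa npb]|/andP[_ //]].
    have : mk Enq a != mk Enq b by apply: contraNneq npb => <-.
    case/(before_total Ea Eb)/orP => // /(p_prefix (mk Enq b) _ erefl)/(_ pa) pb.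
    by rewrite pb in npb.
  have Bd := fifo_w _ _ B Db; have /andP[Da _] := before_mem Bd.
  by rewrite Bw // !nDeq Bd.
- by case/before_mem/andP=> _; rewrite (perm_mem Pw) => /noDE.
Qed.

Lemma filter_value_id x u : ~~ occurs x u -> filter (fun o => o.2 != x) u = u.
Proof. by move/hasPn=> ux; apply/all_filterP/allP. Qed.

Lemma mem_not_occurs x s o : ~~ occurs x s -> o.2 = x -> (o \in s) = false.
Proof. by move=> xs ox; apply: contraNF xs => os; apply/hasP; exists o => //; apply/eqP. Qed.

Section EnqDeqShape.
Variables (x : nat) (u v : sexec).
Hypotheses (Uuv : uniq (u ++ v)) (xu : ~~ occurs x u) (xv : ~~ occurs x v).

Let xuv : ~~ occurs x (u ++ v).
Proof. by rewrite /occurs has_cat negb_or xu. Qed.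

Let Udx : uniq (u ++ mk Deq x :: v).
Proof. by rewrite uniq_insert Uuv (mem_not_occurs xuv). Qed.

Lemma uniq_EnqDeq : uniq (mk Enq x :: u ++ mk Deq x :: v).
Proof. by rewrite cons_uniq Udx mem_insert (mem_not_occurs xuv). Qed.

Lemma mem_EnqDeq o :
  (o \in mk Enq x :: u ++ mk Deq x :: v) = (o == mk Enq x) || (o == mk Deq x) || (o \in u ++ v).
Proof. by rewrite in_cons mem_insert orbA. Qed.

Lemma mem_EnqDeq_value o : o.2 = x ->
  (o \in mk Enq x :: u ++ mk Deq x :: v) = (o == mk Enq x) || (o == mk Deq x).
Proof. by move=> ox; rewrite mem_EnqDeq (mem_not_occurs xuv) // orbF. Qed.

Lemma before_EnqDeq a b : a.2 != x -> b.2 != x ->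
  before (mk Enq x :: u ++ mk Deq x :: v) a b = before (u ++ v) a b.
Proof.
move=> ax bx; have neq o : o.2 != x -> (o != mk Enq x) && (o != mk Deq x).
  by move=> ox; apply/andP; split; apply: contraNneq ox => ->.
have /andP[aE aD] := neq a ax; have /andP[bE bD] := neq b bx.
by rewrite before_cons_neq ?uniq_EnqDeq // before_insert.
Qed.

Lemma before_EnqDeq_Deq b :
  before (mk Enq x :: u ++ mk Deq x :: v) (mk Deq x) b = (b \in v).
Proof. by rewrite before_cons_neq ?uniq_EnqDeq // before_insert_r. Qed.

Lemma before_EnqDeq_to_Deq a : a != mk Enq x ->
  before (mk Enq x :: u ++ mk Deq x :: v) a (mk Deq x) = (a \in u).
Proof. by move=> aE; rewrite before_cons_neq ?uniq_EnqDeq // before_insert_l. Qed.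

End EnqDeqShape.

Lemma queue_valid_EnqDeq x u v : queue_valid (u ++ v) -> only_enq u ->
  ~~ occurs x u -> ~~ occurs x v -> queue_valid (mk Enq x :: u ++ mk Deq x :: v).
Proof.
set w := _ :: _; case=> Uuv DE_uv Deq_uv fifo_uv empty_uv /allP u_enq xu xv.
have Uw : uniq w by apply: uniq_EnqDeq.
have Mw o : o.2 != x -> (o \in w) = (o \in u ++ v).
  by move=> ox; rewrite mem_EnqDeq; do 2![case: eqP => [oE|_]; first by rewrite oE eqxx in ox].
have Bw a b : a.2 != x -> b.2 != x -> before w a b = before (u ++ v) a b.
  exact: before_EnqDeq.
have in_v o : o.1 != Enq -> o.2 != x -> o \in w -> o \in v.
  by move=> oE ox; rewrite Mw // mem_cat => /orP[/u_enq oE'|//]; rewrite oE' in oE.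
split=> // [d o|d|a b|a d].
- move=> Dd; have dx : d != x by apply: contraTneq Dd => ->; rewrite mem_EnqDeq_value.
  move=> ow od; rewrite Mw // in Dd; rewrite Mw ?od // in ow; exact: DE_uv.
- case: (eqVneq d x) => [->|dx Dd].
    by rewrite before_cons_head // mem_insert eqxx.
  by rewrite Bw //; apply: Deq_uv; rewrite -Mw.
- move=> Bab Db; case: (eqVneq a x) => [ax|ax].
    have bx : b != x by apply: contraTneq Bab => ->; rewrite ax before_irr.
    by rewrite ax before_EnqDeq_Deq //; apply: in_v.
  case: (eqVneq b x) => [bx|bx]; first by rewrite bx before_cons_headN in Bab.
  by rewrite Bw // in Bab; rewrite Bw // fifo_uv // -Mw.
- move=> Bad; have /andP[_ Dd] := before_mem Bad.
  have dx : d != x by apply: contraTneq Dd => ->; rewrite mem_EnqDeq_value.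
  case: (eqVneq a x) => [->|ax]; first by rewrite before_EnqDeq_Deq //; apply: in_v.
  by rewrite Bw // in Bad; rewrite Bw // empty_uv.
Qed.

Lemma queue_valid_DeqEmpty x u v : queue_valid (u ++ v) -> matched u ->
  ~~ occurs x u -> ~~ occurs x v -> queue_valid (u ++ mk DeqEmpty x :: v).
Proof.
set e := mk DeqEmpty x; set w := u ++ e :: v.
case=> Uuv DE_uv Deq_uv fifo_uv empty_uv mu xu xv.
have xuv : ~~ occurs x (u ++ v) by rewrite /occurs has_cat negb_or xu.
have Uw : uniq w by rewrite /w uniq_insert Uuv (mem_not_occurs xuv).
have Ew : filter (fun o => o.2 != x) w = u ++ v.
  by rewrite filter_cat /= eqxx !filter_value_id.
have Mw o : o.2 != x -> (o \in w) = (o \in u ++ v) by rewrite -Ew mem_filter => ->.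
have Bw a b : a.2 != x -> b.2 != x -> before w a b = before (u ++ v) a b.
  by rewrite -Ew before_filter // => -> ->; rewrite !andbT.
have Mx o : o.2 = x -> (o \in w) = (o == e).
  by move=> ox; rewrite mem_cat in_cons !(mem_not_occurs _ ox) // orbF.
have nx m d : (m, d) \in w -> m != DeqEmpty -> d != x.
  by move=> md mD; apply: contraTneq md => ->; rewrite Mx // /e /mk xpair_eqE (negbTE mD).
split=> // [d o|d|a b|a d].
- move=> Dd ow od; case: (eqVneq d x) => [dx'|dx'].
    by rewrite dx' in od *; move: (Mx o od); rewrite ow => /esym/eqP.
  by rewrite Mw // in Dd; rewrite Mw ?od // in ow; exact: DE_uv.
- by move=> Dd; have dx' := nx _ _ Dd isT; rewrite Bw // Deq_uv // -Mw.
- move=> Bab Db; have /andP[Ea Eb] := before_mem Bab.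
  have [ax bx] := (nx _ _ Ea isT, nx _ _ Eb isT).
  by rewrite Bw // in Bab; rewrite Bw // fifo_uv // -Mw.
- move=> Bad; have /andP[Ea _] := before_mem Bad; have ax := nx _ _ Ea isT.
  case: (eqVneq d x) => [dx'|dx'].
    by rewrite dx' before_insert_l // in Bad; rewrite dx' before_insert_l // mu.
  by rewrite Bw // in Bad; rewrite Bw // empty_uv.
Qed.

Lemma queue_valid_DeqEmpty_split x w : queue_valid w -> mk DeqEmpty x \in w ->
  exists u v, [/\ w = u ++ mk DeqEmpty x :: v, matched u, ~~ occurs x u & ~~ occurs x v].
Proof.
case=> Uw DE_w _ _ empty_w /[dup] ew.
case/splitPr: ew Uw DE_w empty_w => u v Uw DE_w empty_w ew.
have xuv : ~~ occurs x (u ++ v).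
  apply/hasPn => o ouv; apply/negP => /eqP ox.
  have := DE_w x o ew; rewrite mem_insert ouv orbT => /(_ isT ox) oe.
  by move: Uw; rewrite uniq_insert -oe ouv.
move: (xuv); rewrite /occurs has_cat negb_or => /andP[xu xv].
exists u, v; split=> // d Ed.
have : before (u ++ mk DeqEmpty x :: v) (mk Enq d) (mk DeqEmpty x).
  by rewrite before_insert_l.
by move/empty_w; rewrite before_insert_l.
Qed.

Lemma queue_valid_Deq_order x c w : queue_valid (mk Enq x :: w) ->
  mk Deq c \in w -> c != x -> before w (mk Deq x) (mk Deq c).
Proof.
case=> Uw _ Deq_w fifo_w _ Dc cx.
have Dcw : mk Deq c \in mk Enq x :: w by rewrite in_cons Dc orbT.
have /andP[Ec _] := before_mem (Deq_w c Dcw).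
have Ecw : mk Enq c \in w by move: Ec; rewrite in_cons /mk xpair_eqE /= (negbTE cx).
have := fifo_w x c; rewrite before_cons_head // => /(_ Ecw Dcw).
by rewrite before_cons_neq.
Qed.

Lemma queue_valid_Enq_split x w : queue_valid (mk Enq x :: w) ->
  ~~ has_meth DeqEmpty w -> mk Deq x \notin w -> only_enq w /\ ~~ occurs x w.
Proof.
move=> Vw /hasPn noDE nDx; have [/andP[nEx _] _ _ _ _] := Vw.
split; [apply/allP|apply/hasPn] => -[m c] cw /=; have := noDE _ cw; case: m cw => //= cw _.
- have cx : c != x by apply: contraNneq nDx => <-.
  by move: (queue_valid_Deq_order Vw cw cx) => /before_mem/andP[Dxw _]; rewrite Dxw in nDx.
- by apply: contraNneq nEx => <-.
- by apply: contraNneq nDx => <-.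
Qed.

Lemma queue_valid_EnqDeq_split x w : queue_valid (mk Enq x :: w) ->
  ~~ has_meth DeqEmpty w -> mk Deq x \in w ->
  exists u v, [/\ w = u ++ mk Deq x :: v, only_enq u, ~~ occurs x u & ~~ occurs x v].
Proof.
move=> + /hasPn noDE /[dup] Dx; case/splitPr: Dx noDE => u v noDE Vw Dx.
have [+ _ _ _ _] := Vw; rewrite cons_uniq => /andP[nEx Uw].
have xuv : ~~ occurs x (u ++ v).
  apply/hasPn => -[m c] cuv /=.
  have cw : (m, c) \in u ++ mk Deq x :: v by rewrite mem_insert cuv orbT.
  have := noDE _ cw; case: m cw cuv => //= cw cuv _; apply: contraTneq cuv => ->.
    by apply: contraNN nEx; rewrite mem_insert => ->; rewrite orbT.
  by move: Uw; rewrite uniq_insert => /andP[].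
move: (xuv); rewrite /occurs has_cat negb_or => /andP[xu xv].
exists u, v; split=> //; apply/allP => -[m c] cu /=.
have cw : (m, c) \in u ++ mk Deq x :: v by rewrite mem_cat cu.
have := noDE _ cw; case: m cu cw => //= cu cw _.
have cx : c != x by apply: contraNneq xu => <-; apply/hasP; exists (Deq, c).
have := queue_valid_Deq_order Vw cw cx.
by rewrite before_asym // before_insert_l.
Qed.

Lemma gen_queue_valid b1 b2 b3 w : gen b1 b2 b3 w -> queue_valid w.
Proof.
elim=> {w} [|x u _ _ [Uu _ _ _ _] enq xu|x u v _ _|x u v _ _].
- exact: queue_valid_only_enq.
- by apply: queue_valid_only_enq; rewrite ?cons_uniq ?Uu ?(mem_not_occurs xu) //= enq.
- exact: queue_valid_EnqDeq.
- exact: queue_valid_DeqEmpty.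
Qed.

Lemma gen_no_DeqEmpty b1 b2 w : gen b1 b2 false w -> ~~ has_meth DeqEmpty w.
Proof.
elim=> // x u v _ _ /hasPn nuv _ _ _; apply/hasPn => o.
by rewrite in_cons mem_insert => /or3P[/eqP->|/eqP->|/nuv].
Qed.

Lemma size_filter_lt (T : Type) (p : pred T) s : has (predC p) s -> size (filter p s) < size s.
Proof. by rewrite size_filter -(count_predC p s) -{1}[count p s]addn0 ltn_add2l -has_count. Qed.

Lemma has_meth_filter m (p : pred op) w : has_meth m (filter p w) -> has_meth m w.
Proof. by case/hasP=> o; rewrite mem_filter => /andP[_ ow] om; apply/hasP; exists o. Qed.

Lemma queue_valid_gen (b2 b3 : bool) w : queue_valid w ->
  (has_meth Deq w -> b2) -> (has_meth DeqEmpty w -> b3) -> gen true b2 b3 w.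
Proof.
have [n] := ubnP (size w); elim: n w => // n IH w /ltnSE size_w Vw b2D b3E.
have IHx x : occurs x w -> gen true b2 b3 (filter (fun o => o.2 != x) w).
  move=> xw; apply: IH.
  - apply: leq_trans (size_filter_lt _) size_w.
    by rewrite (eq_has (fun o => negbK (o.2 == x))).
  - exact: (queue_valid_filter (predC1 x)).
  - by move/has_meth_filter.
  - by move/has_meth_filter.
case: (boolP (has_meth DeqEmpty w)) => [/hasP[[m x] ew /eqP /= mE]|noDE].
  subst m; have [u [v [Ew mu xu xv]]] := queue_valid_DeqEmpty_split Vw ew.
  rewrite Ew; apply: gen_RDeqEmpty => //.
    by apply: b3E; apply/hasP; exists (mk DeqEmpty x).
  have := IHx x; rewrite Ew filter_cat /= eqxx !filter_value_id //; apply.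
  by apply/hasP; exists (mk DeqEmpty x); rewrite ?mem_cat ?in_cons ?eqxx ?orbT.
clear size_w b3E; case: w => [|[m x] w] in Vw b2D IHx noDE *; first exact: gen_R0.
have xw : occurs x ((m, x) :: w) by rewrite /occurs /= eqxx.
have noDEw : ~~ has_meth DeqEmpty w by apply: contraNN noDE => /= ->; rewrite orbT.
case: m in Vw b2D IHx noDE xw *.
- case: (boolP (mk Deq x \in w)) => Dx.
    have [u [v [Ew enq xu xv]]] := queue_valid_EnqDeq_split Vw noDEw Dx.
    rewrite Ew in IHx xw b2D *.
    apply: gen_REnqDeq => //.
      by apply: b2D; apply/hasP; exists (mk Deq x); rewrite // in_cons mem_insert eqxx orbT.
    by have := IHx x xw; rewrite /= eqxx /= filter_cat /= eqxx /= !filter_value_id.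
  have [enq xw'] := queue_valid_Enq_split Vw noDEw Dx.
  by apply: gen_REnq => //; have := IHx x xw; rewrite /= eqxx /= filter_value_id.
- by case: Vw => U _ /(_ x); rewrite in_cons eqxx /= /mk (before_cons_headN _ U) => /(_ isT).
- by move: noDE; rewrite /has_meth /=.
Qed.

Section Extension.
Variables (h : history) (x : nat) (w' : sexec).
Hypotheses (Hh : is_history h) (Lw' : linearization (hist_remove h x) w').

Let hb_ops a b : hb h a b -> a \in ops h /\ b \in ops h.
Proof. by case: Hh => _ + _ _ _; apply. Qed.

Let hb_irr a : ~ hb h a a.
Proof. by case: Hh => _ _ + _ _; apply. Qed.

Let hb_trans a b c : hb h a b -> hb h b c -> hb h a c.
Proof. by case: Hh => _ _ _ + _; apply. Qed.

Let hb_interval a b c d : hb h a b -> hb h c d -> hb h a d \/ hb h c b.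
Proof. by case: Hh => _ _ _ _; apply. Qed.

Let Uw' : uniq w'.
Proof. by case: Lw'. Qed.

Lemma mem_lin_remove o : (o \in w') = (o \in ops h) && (o.2 != x).
Proof. by case: Lw' => _ <- _; rewrite mem_filter andbC. Qed.

Lemma hb_lin_remove a b : hb h a b -> a.2 != x -> b.2 != x -> before w' a b.
Proof. by case: Lw' => _ _ hb_w' hab /eqP ax /eqP bx; apply: hb_w'. Qed.

Lemma lin_remove_filter_not_occurs (r : pred op) : ~~ occurs x (filter r w').
Proof. by apply/hasPn => o; rewrite mem_filter mem_lin_remove => /and3P[]. Qed.

Let value_lin_remove o : o \in w' -> o.2 != x.
Proof. by rewrite mem_lin_remove => /andP[]. Qed.

Let ops_lin_remove o : o \in w' -> o \in ops h.
Proof. by rewrite mem_lin_remove => /andP[]. Qed.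

Section EnqDeq.
Variables (u v : sexec).
Hypotheses (Lu : linearization h (mk Enq x :: u ++ mk Deq x :: v))
  (enq_u : only_enq u) (xu : ~~ occurs x u) (xv : ~~ occurs x v)
  (Vw' : queue_valid w') (noDE_w' : ~~ has_meth DeqEmpty w').

(* [a \in w'] excludes [Enq x], whose [index] in [w'] would be the junk value [size w']. *)
Definition enq_prefix (o : op) : bool :=
  `[< o.1 = Enq /\ exists a, [/\ a \in w', hb h a (mk Deq x) & index o w' <= index a w'] >].

Let Uuv : uniq (u ++ v).
Proof. by case: Lu => + _ _; rewrite cons_uniq uniq_insert => /and3P[]. Qed.

Let ops_x o : o \in ops h -> o.2 = x -> (o == mk Enq x) || (o == mk Deq x).
Proof. by case: Lu => _ hu _ oh ox; rewrite hu mem_EnqDeq_value in oh. Qed.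

Let hb_to_Enq a : ~ hb h a (mk Enq x).
Proof. by case: Lu => U _ /[apply]; rewrite before_cons_headN. Qed.

Let hb_to_Deq a : hb h a (mk Deq x) -> a != mk Enq x -> a \in u.
Proof. by case: Lu => _ _ /[apply] + aE; rewrite before_EnqDeq_to_Deq. Qed.

Lemma enq_prefix_Enq o : enq_prefix o -> o.1 = Enq.
Proof. by case/asboolP. Qed.

Lemma enq_prefix_closed a b : a.1 = Enq -> before w' a b -> enq_prefix b -> enq_prefix a.
Proof.
move=> aE /and3P[_ _ ab] /asboolP[_ [c [cw hc bc]]]; apply/asboolP; split=> //.
by exists c; split=> //; rewrite ltnW // (leq_trans ab).
Qed.

Lemma enq_prefix_hb a b : a \in w' -> b \in w' -> hb h a b -> enq_prefix b -> enq_prefix a.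
Proof.
move=> aw bw hab /[dup] pb /asboolP[_ [c [cw hc bc]]].
have Bab := hb_lin_remove hab (value_lin_remove aw) (value_lin_remove bw).
case: (eqVneq a.1 Enq) => [aE|aE]; first exact: enq_prefix_closed Bab pb.
case: (hb_interval hab hc) => [had|hcb].
  have aEx : a != mk Enq x by apply: contraTneq aw => ->; rewrite mem_lin_remove eqxx andbF.
  by rewrite (allP enq_u _ (hb_to_Deq had aEx)) in aE.
have /and3P[_ _] := hb_lin_remove hcb (value_lin_remove cw) (value_lin_remove bw).
by rewrite ltnNge bc.
Qed.

Lemma enq_prefix_to_Deq a : a \in w' -> hb h a (mk Deq x) -> enq_prefix a.
Proof.
move=> aw had; have aEx : a != mk Enq x.
  by apply: contraTneq aw => ->; rewrite mem_lin_remove eqxx andbF.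
apply/asboolP; split; first exact/eqP/(allP enq_u)/hb_to_Deq.
by exists a; split.
Qed.

Lemma enq_prefix_from_Deq b : b \in w' -> hb h (mk Deq x) b -> ~~ enq_prefix b.
Proof.
move=> bw hdb; apply/asboolP => -[_ [c [cw hc bc]]].
have /and3P[_ _] := hb_lin_remove (hb_trans hc hdb) (value_lin_remove cw) (value_lin_remove bw).
by rewrite ltnNge bc.
Qed.

Let wl := filter enq_prefix w'.
Let wr := filter (predC enq_prefix) w'.

Let Pw : perm_eq (wl ++ wr) w'.
Proof. exact: perm_filterC_cat. Qed.

Let Uwlr : uniq (wl ++ wr).
Proof. by rewrite (perm_uniq Pw). Qed.

Let xl : ~~ occurs x wl. Proof. exact: lin_remove_filter_not_occurs. Qed.
Let xr : ~~ occurs x wr. Proof. exact: lin_remove_filter_not_occurs. Qed.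

Lemma EnqDeq_witness_gen : L_R0_Enq_EnqDeq (mk Enq x :: wl ++ mk Deq x :: wr).
Proof.
apply: gen_REnqDeq => //.
  apply: queue_valid_gen => //.
    apply: queue_valid_part_enq => //; [exact: enq_prefix_Enq|exact: enq_prefix_closed].
  by move: noDE_w'; rewrite /has_meth -(perm_has _ Pw) => /negbTE->.
by apply/allP => o; rewrite mem_filter => /andP[/enq_prefix_Enq -> _].
Qed.

Lemma EnqDeq_witness_mem : ops h =i mk Enq x :: wl ++ mk Deq x :: wr.
Proof.
move=> o; case: (eqVneq o.2 x) => ox.
  rewrite mem_EnqDeq_value //; apply/idP/idP => [/ops_x/(_ ox) //|].
  by case: Lu => _ hu _; rewrite hu mem_EnqDeq => ->.
rewrite mem_EnqDeq (perm_mem Pw) mem_lin_remove ox andbT.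
by do 2![case: eqP => [oE|_]; first by rewrite oE eqxx in ox].
Qed.

Lemma EnqDeq_witness_hb a b : hb h a b -> before (mk Enq x :: wl ++ mk Deq x :: wr) a b.
Proof.
move=> hab; have [ah bh] := hb_ops hab.
have mem_w o : o \in ops h -> o.2 != x -> o \in w' by rewrite mem_lin_remove => -> ->.
case: (eqVneq b.2 x) => bx.
  case/orP: (ops_x bh bx) => /eqP Eb; first by rewrite Eb in hab; case: (hb_to_Enq hab).
  rewrite Eb in hab *; case: (eqVneq a.2 x) => ax.
    case/orP: (ops_x ah ax) => /eqP Ea; rewrite Ea in hab *; last by case: (hb_irr hab).
    by rewrite before_cons_head ?uniq_EnqDeq // mem_insert eqxx.
  have aw := mem_w _ ah ax; have aE : a != mk Enq x by apply: contraNneq ax => ->.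
  by rewrite before_EnqDeq_to_Deq // mem_filter aw enq_prefix_to_Deq.
have bw := mem_w _ bh bx; case: (eqVneq a.2 x) => ax.
  case/orP: (ops_x ah ax) => /eqP Ea; rewrite Ea in hab *.
    by rewrite before_cons_head ?uniq_EnqDeq // mem_insert (perm_mem Pw) bw orbT.
  by rewrite before_EnqDeq_Deq // mem_filter /= enq_prefix_from_Deq.
have aw := mem_w _ ah ax.
rewrite before_EnqDeq // before_part // (hb_lin_remove hab) // andbT.
by case pb: (enq_prefix b); [rewrite (enq_prefix_hb aw bw hab pb)|case: (enq_prefix a)].
Qed.

Lemma EnqDeq_extension : exists2 w, L_R0_Enq_EnqDeq w & linearization h w.
Proof.
exists (mk Enq x :: wl ++ mk Deq x :: wr); first exact: EnqDeq_witness_gen.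
by split; [exact: uniq_EnqDeq|exact: EnqDeq_witness_mem|exact: EnqDeq_witness_hb].
Qed.

End EnqDeq.

Section DeqEmpty.
Variables (u v : sexec).
Hypotheses (Hd : differentiated h) (Lu : linearization h (u ++ mk DeqEmpty x :: v))
  (mu : matched u) (xu : ~~ occurs x u) (xv : ~~ occurs x v) (Vw' : queue_valid w').

Inductive pre_empty : nat -> Prop :=
| pre_empty_hb o : hb h o (mk DeqEmpty x) -> pre_empty o.2
| pre_empty_pred o o' : hb h o o' -> pre_empty o'.2 -> pre_empty o.2.

Definition in_prefix (q : op) : bool := (q \in u) || (q.1 == Enq) && (mk Deq q.2 \in u).

Definition settled (z : op) : Prop :=
  ~ hb h (mk DeqEmpty x) z /\ forall q, hb h q z -> in_prefix q.

Let Uw : uniq (u ++ mk DeqEmpty x :: v).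
Proof. by case: Lu. Qed.

Let ops_x o : o \in ops h -> o.2 = x -> o = mk DeqEmpty x.
Proof.
case: Lu => _ -> _ + ox; rewrite mem_insert => /orP[/eqP //|].
by rewrite mem_cat !(mem_not_occurs _ ox).
Qed.

Let ops_u o : o \in u -> o \in ops h.
Proof. by case: Lu => _ -> _ ou; rewrite mem_cat ou. Qed.

Let hb_in_u a b : hb h a b -> b \in u -> a \in u.
Proof. by case: Lu => _ _ /[apply]; apply: before_prefix. Qed.

Let hb_to_empty a : hb h a (mk DeqEmpty x) -> a \in u.
Proof. by case: Lu => _ _ /[apply]; rewrite before_insert_l. Qed.

Let hb_from_empty b : hb h (mk DeqEmpty x) b -> b \notin u.
Proof.
case: Lu => _ _ /[apply]; rewrite before_insert_r // => bv.
by have := Uw; rewrite uniq_insert cat_uniq => /and4P[_ _ /hasPn/(_ b bv) ? _].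
Qed.

Let Deq_not_before_Enq y : ~ hb h (mk Deq y) (mk Enq y).
Proof.
move=> hDE; have [Dh Eh] := hb_ops hDE.
have yx : y != x by apply: contraTneq Dh => ->; apply/negP => /ops_x/(_ erefl).
have Dw : mk Deq y \in w' by rewrite mem_lin_remove Dh.
case: Vw' => _ _ /(_ y Dw) B _ _.
by have := hb_lin_remove hDE yx yx; rewrite before_asym.
Qed.

Let same_value o o' : o \in ops h -> o' \in ops h -> o.2 = o'.2 ->
  [\/ o' = o, o = mk Enq o.2 /\ o' = mk Deq o.2 | o = mk Deq o.2 /\ o' = mk Enq o.2].
Proof.
case: Hd => _ DE_h; case: o => m y; case: o' => m' y' oh o'h /= yy'; subst y'.
case: m oh; case: m' o'h => o'h oh; do ?[by constructor 1|by constructor 2|by constructor 3].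
all: constructor 1.
all: first [exact: DE_h oh erefl _ o'h erefl|exact/esym/(DE_h _ o'h erefl _ oh erefl)].
Qed.

Lemma settled_Deq y : mk Deq y \in u -> settled (mk Deq y) /\ in_prefix (mk Deq y).
Proof.
move=> Du; split; last by rewrite /in_prefix Du.
split; first by move/hb_from_empty; rewrite Du.
by move=> q /hb_in_u/(_ Du) qu; rewrite /in_prefix qu.
Qed.

Lemma settled_pred o z : hb h o z -> settled z ->
  forall o', o' \in ops h -> o'.2 = o.2 -> settled o' /\ in_prefix o'.
Proof.
move=> hoz [nez pre_z] o' o'h oo'; have [oh _] := hb_ops hoz.
have pre_o := pre_z o hoz.
case: (same_value oh o'h (esym oo')) => [->|[Eo ->]|[Eo ->]].
- by split=> //; split=> [/hb_trans/(_ hoz)|q /hb_trans/(_ hoz)/pre_z].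
- by apply: settled_Deq; move: pre_o; rewrite Eo => /orP[/mu|/andP[_ //]].
- have Du : mk Deq o.2 \in u by move: pre_o; rewrite Eo => /orP[|/andP[]].
  rewrite Eo in hoz; split; last by rewrite /in_prefix Du orbT.
  (* interval order against [hb (Deq y) z], since [Deq y] never precedes [Enq y] *)
  split=> [heE|q hqE].
    by case: (hb_interval heE hoz) => // /Deq_not_before_Enq.
  by case: (hb_interval hqE hoz) => [/pre_z|/Deq_not_before_Enq].
Qed.

Lemma pre_empty_settled d : pre_empty d ->
  forall o, o \in ops h -> o.2 = d -> settled o /\ in_prefix o.
Proof.
elim=> {d} [o hoe|o o' hoo' _ IH] o'' o''h E.
  apply: settled_pred hoe _ _ o''h E.
  by split=> [/hb_irr //|q /hb_to_empty qu]; rewrite /in_prefix qu.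
have [_ o'h] := hb_ops hoo'.
exact: settled_pred hoo' (IH _ o'h erefl).1 _ o''h E.
Qed.

Let pre (d : nat) : bool := `[< pre_empty d >].
Let wl := filter (fun o => pre o.2) w'.
Let wr := filter (predC (fun o => pre o.2)) w'.

Let Pw : perm_eq (wl ++ wr) w'.
Proof. exact: perm_filterC_cat. Qed.

Let xlr : ~~ occurs x (wl ++ wr).
Proof. by rewrite /occurs has_cat negb_or !lin_remove_filter_not_occurs. Qed.

Let Uw2 : uniq (wl ++ mk DeqEmpty x :: wr).
Proof. by rewrite uniq_insert (perm_uniq Pw) Uw' (mem_not_occurs xlr). Qed.

Lemma matched_pre_empty : matched wl.
Proof.
move=> d; rewrite !mem_filter => /andP[/asboolP pd Ew].
have dx : d != x by have := value_lin_remove Ew.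
have Du : mk Deq d \in u.
  by case: (pre_empty_settled pd (ops_lin_remove Ew) erefl) => _ /orP[/mu|/andP[]].
by rewrite mem_lin_remove ops_u //= dx andbT; apply/asboolP.
Qed.

Lemma DeqEmpty_witness_gen : Queue (wl ++ mk DeqEmpty x :: wr).
Proof.
apply: gen_RDeqEmpty; rewrite ?lin_remove_filter_not_occurs //.
  by apply: queue_valid_gen => //; exact: (queue_valid_part_value (q := pre)) matched_pre_empty.
exact: matched_pre_empty.
Qed.

Lemma DeqEmpty_witness_mem : ops h =i wl ++ mk DeqEmpty x :: wr.
Proof.
move=> o; rewrite mem_insert; case: (eqVneq o.2 x) => ox.
  rewrite (mem_not_occurs xlr) // orbF; apply/idP/eqP => [/ops_x/(_ ox) //|->].
  by case: Lu => _ -> _; rewrite mem_insert eqxx.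
rewrite (perm_mem Pw) mem_lin_remove ox andbT.
by case: eqP => [oe|//]; rewrite oe eqxx in ox.
Qed.

Lemma DeqEmpty_witness_hb a b : hb h a b -> before (wl ++ mk DeqEmpty x :: wr) a b.
Proof.
move=> hab; have [ah bh] := hb_ops hab.
have neq_e o : o.2 != x -> o != mk DeqEmpty x by move=> ox; apply: contraNneq ox => ->.
case: (eqVneq b.2 x) => bx.
  rewrite (ops_x bh bx) in hab *; case: (eqVneq a.2 x) => ax.
    by rewrite (ops_x ah ax) in hab; case: (hb_irr hab).
  rewrite before_insert_l // /wl mem_filter mem_lin_remove ah ax /= andbT.
  by apply/asboolP; exact: (pre_empty_hb hab).
case: (eqVneq a.2 x) => ax.
  rewrite (ops_x ah ax) in hab *.
  rewrite before_insert_r // /wr mem_filter mem_lin_remove bh bx /= andbT.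
  by apply/asboolP => /pre_empty_settled/(_ b bh erefl) [[/(_ hab)]].
rewrite before_insert ?neq_e // before_part ?mem_lin_remove ?ah ?bh ?ax ?bx //.
rewrite (hb_lin_remove hab) // andbT.
case fb: (pre b.2); last by case: (pre a.2).
by have -> : pre a.2 by apply/asboolP; apply: pre_empty_pred hab _; apply/asboolP.
Qed.

Lemma DeqEmpty_extension : exists2 w, Queue w & linearization h w.
Proof.
exists (wl ++ mk DeqEmpty x :: wr); first exact: DeqEmpty_witness_gen.
by split; [exact: Uw2|exact: DeqEmpty_witness_mem|exact: DeqEmpty_witness_hb].
Qed.

End DeqEmpty.

End Extension.

Theorem mainTheorem1 (h : history) (x : nat) :
  is_history h -> differentiated h ->
  [/\ (forall u, M_R0 x u -> lin h u ->
         lin_set (hist_remove h x) L_R0 -> lin_set h L_R0),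
      (forall u, M_REnq x u -> lin h u ->
         lin_set (hist_remove h x) L_R0_Enq -> lin_set h L_R0_Enq),
      (forall u, M_REnqDeq x u -> lin h u ->
         lin_set (hist_remove h x) L_R0_Enq_EnqDeq -> lin_set h L_R0_Enq_EnqDeq)
    & (forall u, M_RDeqEmpty x u -> lin h u ->
         lin_set (hist_remove h x) Queue -> lin_set h Queue)].
Proof.
move=> Hh Hd; have hb_ops : forall a b, hb h a b -> a \in ops h /\ b \in ops h by case: Hh.
have hb_ops_rm a b : hb (hist_remove h x) a b ->
    a \in ops (hist_remove h x) /\ b \in ops (hist_remove h x).
  by case=> /hb_ops[ah bh] [/eqP ax /eqP bx]; rewrite !mem_filter ah bh ax bx.
split.
- by move=> u -> lu _; exists [::] => //; apply: gen_R0.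
- move=> u [u' [Eu enq_u' _]] lu _; exists u => //.
  have [Uu _ _] := (linP u hb_ops).1 lu.
  have enq_u : only_enq u by rewrite Eu /only_enq /= -/(only_enq u') enq_u'.
  apply: queue_valid_gen (queue_valid_only_enq Uu enq_u) _ _ => /hasP[o /(allP enq_u) /eqP -> //].
- move=> _ [u [v [-> enq_u xu xv]]] /(linP _ hb_ops) Lu [w' Gw' /(linP _ hb_ops_rm) Lw'].
  have [w Gw Lw] :=
    EnqDeq_extension Hh Lw' Lu enq_u xu xv (gen_queue_valid Gw') (gen_no_DeqEmpty Gw').
  by exists w => //; apply/(linP _ hb_ops).
- move=> _ [u [v [-> mu xu xv]]] /(linP _ hb_ops) Lu [w' Gw' /(linP _ hb_ops_rm) Lw'].
  have [w Gw Lw] := DeqEmpty_extension Hh Lw' Hd Lu mu xu xv (gen_queue_valid Gw').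
  by exists w => //; apply/(linP _ hb_ops).
Qed.
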